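(* Let $n\geqslant m\geqslant2$ with $n+m$ even. Then $\mathrm{SR}(n,m)-\mathrm{DR}(n,m)=\left\lceil\frac{m}{2}\right\rceil$.
   Context: Let $p,q$ be distinct primes and $n,m$ positive integers. In $C_{p^nq^m}$ let $C_{p^aq^x}$ be the unique subgroup of order $p^aq^x$, and write $(a,x;b,y)$ for the pair of subgroups $(C_{p^aq^x},C_{p^bq^y})$ with $0\leqslant a\leqslant b\leqslant n$, $0\leqslant x\leqslant y\leqslant m$, $(a,x)\neq(b,y)$. Its midpoint is $(a+x+b+y)/2$, and $R_M$ is the set of all such pairs with midpoint $M$. The simple rainbow number $\mathrm{SR}(n,m)$ is $|R_{(n+m)/2}|$ if $n+m$ is odd, and $|R_{(n+m-1)/2}|$ (which equals $|R_{(n+m+1)/2}|$) if $n+m$ is even. For $n,m\geqslant2$ with $n+m$ even, the double rainbow number is $\mathrm{DR}(n,m)=|R_{(n+m)/2}|$. *)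

From mathcomp Require Import all_boot.
Set Implicit Arguments. Unset Strict Implicit. Unset Printing Implicit Defensive.

(* The subgroup C_{p^a q^x} of C_{p^n q^m} is identified with the exponent
   pair (a, x) : 'I_n.+1 * 'I_m.+1 (bijective correspondence).
   A pair (a,x;b,y) is encoded as ((a,x),(b,y)).
   Midpoints may be half-integers, so we index R by the DOUBLED midpoint
   s = 2M = a + x + b + y. *)
Definition subgrp (n m : nat) := ('I_n.+1 * 'I_m.+1)%type.

Definition Rset (n m s : nat) : {set subgrp n m * subgrp n m} :=
  [set P : subgrp n m * subgrp n m |
     [&& (P.1.1 : nat) <= P.2.1, (P.1.2 : nat) <= P.2.2, P.1 != P.2 &
         (P.1.1 : nat) + P.1.2 + P.2.1 + P.2.2 == s]].

Definition Rcard (n m s : nat) : nat := #|Rset n m s|.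

Definition SR (n m : nat) : nat :=
  if odd (n + m) then Rcard n m (n + m) else Rcard n m (n + m - 1).

(* double rainbow number (meaningful for n,m >= 2, n+m even): |R_{(n+m)/2}| *)
Definition DR (n m : nat) : nat := Rcard n m (n + m).

From mathcomp Require Import all_boot all_algebra zify.

(* Counting the pairs (a,x;b,y) with a <= b, x <= y and a + x + b + y = s,
   diagonal ones included, gives the convolution c(s) = \sum_u f_n(u) f_m(s - u)
   of f_n(u) = #{a <= b <= n | a + b = u}.  Since f_{n+2}(u+2) = f_n(u) + 1, the
   jump c(s+1) - c(s) is unchanged when n and s both grow by 2, except for a
   term f_m(s+3) that vanishes once s+3 > 2m.  Growing n (or, by symmetry, m)
   two at a time from n = m = 1, 2 gives c(n+m) - c(n+m-1) = m/2 + 1.  The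
   diagonal pairs contribute m + 1 at s = n + m and nothing at the odd
   s = n + m - 1, so SR - DR = (m + 1) - (m/2 + 1) = ceil(m/2). *)

Lemma sum_ord_interval k lo hi :
  \sum_(a < k) (lo <= a < hi) = minn hi k - lo.
Proof. by elim: k => [|k IHk]; rewrite ?big_ord0 ?big_ord_recr ?IHk /=; lia. Qed.

Lemma sum_ord_eq_mul k j (h : nat -> nat) :
  \sum_(u < k) (j == u :> nat) * h u = (j < k) * h j.
Proof.
elim: k => [|k IHk]; first by rewrite big_ord0.
rewrite big_ord_recr /= IHk.
case: ltngtP => [lt_jk|lt_kj|->]; rewrite ?mul0n ?addn0 ?ltnS ?leqnn //.
  by rewrite (ltnW lt_jk).
by rewrite leqNgt lt_kj.
Qed.

Lemma sum_pair (I J : finType) (F : I * J -> nat) :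
  \sum_(p : I * J) F p = \sum_(i : I) \sum_(j : J) F (i, j).
Proof. by rewrite pair_bigA; apply: eq_bigr => -[]. Qed.

(* The a of a split u = a + b with a <= b <= n ranges over [u - n, u/2]. *)
Definition sorted_splits (n u : nat) : nat := u./2.+1 - (u - n).

Lemma sum_sorted_splits n u :
  \sum_(a < n.+1) \sum_(b < n.+1) ((a <= b) && (a + b == u)) = sorted_splits n u.
Proof.
transitivity (\sum_(a < n.+1) ((u - n <= a < u./2.+1) : nat)).
  apply: eq_bigr => a _.
  rewrite (eq_bigr (fun b : 'I_n.+1 => (a + a <= u) * (u - a <= b < (u - a).+1)));
    last by move=> b _; lia.
  rewrite -big_distrr sum_ord_interval /=.
  by have := ltn_ord a; case: leqP => /=; lia.
by rewrite sum_ord_interval /sorted_splits; lia.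
Qed.

Lemma sorted_splitsSS n u :
  u <= n.+1.*2 -> sorted_splits n.+2 u.+2 = sorted_splits n u + 1.
Proof. by rewrite /sorted_splits; lia. Qed.

Lemma sorted_splits_eq0 n u : n.*2 < u -> sorted_splits n u = 0.
Proof. by rewrite /sorted_splits; lia. Qed.

Definition conv_splits n m s :=
  \sum_(u < s.+1) sorted_splits n u * sorted_splits m (s - u).

Lemma sum_sorted_quads n m s :
  \sum_(a < n.+1) \sum_(b < n.+1) \sum_(x < m.+1) \sum_(y < m.+1)
    ((a <= b) && (x <= y) && (a + x + b + y == s)) = conv_splits n m s.
Proof.
transitivity (\sum_(a < n.+1) \sum_(b < n.+1) \sum_(u < s.+1)
                (a <= b) * ((a + b == u :> nat) * sorted_splits m (s - u))).
  apply: eq_bigr => a _; apply: eq_bigr => b _.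
  rewrite -big_distrr (sum_ord_eq_mul _ _ (fun u => sorted_splits m (s - u))).
  rewrite -(sum_sorted_splits m (s - (a + b))) !big_distrr /=.
  apply: eq_bigr => x _; rewrite !big_distrr; apply: eq_bigr => y _ /=; lia.
under eq_bigr => a _ do rewrite exchange_big.
rewrite exchange_big /conv_splits; apply: eq_bigr => u _.
rewrite -(sum_sorted_splits n u) big_distrl; apply: eq_bigr => a _.
by rewrite big_distrl; apply: eq_bigr => b _ /=; lia.
Qed.

Definition diag_count n m s := \sum_(p : subgrp n m) ((p.1 + p.2).*2 == s).

Lemma Rcard_add_diag n m s : Rcard n m s + diag_count n m s = conv_splits n m s.
Proof.
rewrite -sum_sorted_quads; under eq_bigr => a _ do rewrite exchange_big.
rewrite /Rcard /diag_count -sum1_card big_mkcond /= !sum_pair -big_split.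
apply: eq_bigr => a _; rewrite -big_split; apply: eq_bigr => x _ /=.
rewrite -(@sum_pair _ _ (fun q : subgrp n m =>
            ((a <= q.1) && (x <= q.2) && (a + x + q.1 + q.2 == s) : nat))).
rewrite (bigD1 (a, x)) // [in RHS](bigD1 (a, x)) //= inE eqxx !andbF add0n.
rewrite addnC; congr (_ + _); first by rewrite !leqnn -addnn !addnA.
by apply: eq_bigr => q; rewrite inE eq_sym => /= ->; rewrite andbA; case: ifP.
Qed.

Lemma diag_count_odd n m s : odd s -> diag_count n m s = 0.
Proof. by move=> odd_s; apply: big1 => p _; lia. Qed.

Lemma diag_count_mid n m :
  m <= n -> ~~ odd (n + m) -> diag_count n m (n + m) = m.+1.
Proof.
move=> le_mn even_nm; rewrite /diag_count sum_pair exchange_big /=.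
rewrite (eq_bigr (fun=> 1)) ?sum_nat_const ?card_ord ?muln1 // => x _.
rewrite (eq_bigr (fun a : 'I_n.+1 =>
           ((n + m)./2 - x <= a < ((n + m)./2 - x).+1 : nat))).
  by rewrite sum_ord_interval; have := ltn_ord x; lia.
by move=> a _; have := ltn_ord x; lia.
Qed.

Lemma conv_splits_sym n m s : conv_splits n m s = conv_splits m n s.
Proof.
rewrite /conv_splits (reindex_inj rev_ord_inj); apply: eq_bigr => u _ /=.
by rewrite mulnC subSS subKn // -ltnS.
Qed.

Lemma conv_splits_shiftl n m s : s <= n.+1.*2 ->
  conv_splits n.+2 m s.+2
  = conv_splits n m s + \sum_(u < s.+3) sorted_splits m (s.+2 - u).
Proof.
move=> le_s; rewrite /conv_splits !(big_ord_recl s.+2) !(big_ord_recl s.+1) /=.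
have -> : \sum_(i < s.+1) sorted_splits n.+2 (bump 0 (bump 0 i))
                          * sorted_splits m (s.+2 - bump 0 (bump 0 i))
    = \sum_(i < s.+1) (sorted_splits n i * sorted_splits m (s - i)
                       + sorted_splits m (s - i)).
  apply: eq_bigr => i _; rewrite /bump /= !add1n !subSS sorted_splitsSS.
    by rewrite mulnDl mul1n.
  by have := ltn_ord i; lia.
have -> : \sum_(i < s.+1) sorted_splits m (s.+2 - bump 0 (bump 0 i))
    = \sum_(i < s.+1) sorted_splits m (s - i).
  by apply: eq_bigr => i _; rewrite /bump /= !add1n.
rewrite big_split /= /bump /= subn0.
by rewrite (_ : sorted_splits n.+2 0 = 1) // (_ : sorted_splits n.+2 1 = 1) //; lia.
Qed.

Lemma conv_splits_jumpl n m s d : s.+1 <= n.+1.*2 ->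
  conv_splits n m s.+1 = conv_splits n m s + d ->
  conv_splits n.+2 m s.+3 = conv_splits n.+2 m s.+2 + d + sorted_splits m s.+3.
Proof.
move=> le_s jump; rewrite conv_splits_shiftl // conv_splits_shiftl ?(ltnW le_s) //.
rewrite jump (big_ord_recl s.+3) subn0.
by under eq_bigr => u _ do rewrite /bump /= subSS; lia.
Qed.

Lemma conv_splits_jumpr n m s d : s.+1 <= m.+1.*2 ->
  conv_splits n m s.+1 = conv_splits n m s + d ->
  conv_splits n m.+2 s.+3 = conv_splits n m.+2 s.+2 + d + sorted_splits n s.+3.
Proof. by rewrite ![conv_splits n _ _]conv_splits_sym; apply: conv_splits_jumpl. Qed.

Lemma conv_splits_jump_diag k :
  conv_splits k.+1 k.+1 (k + k).+2
  = conv_splits k.+1 k.+1 (k + k).+1 + k.+1./2.+1.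
Proof.
elim/ltn_ind: k => -[|[|k]] IHk;
  [by rewrite /conv_splits !big_ord_recr !big_ord0 ..|].
have jump : conv_splits k.+3 k.+1 (k + k).+4
            = conv_splits k.+3 k.+1 (k + k).+3 + k.+1./2.+1.
  by rewrite (conv_splits_jumpl _ _ _ _ _ (IHk k _)) 1?sorted_splits_eq0; lia.
rewrite (_ : k.+2 + k.+2 = (k + k).+4); last by lia.
rewrite (conv_splits_jumpr _ _ _ _ _ jump); last by lia.
by rewrite /sorted_splits; lia.
Qed.

Lemma conv_splits_jump n k : k < n -> odd (n + k) ->
  conv_splits n k.+1 (n + k).+1 = conv_splits n k.+1 (n + k) + k.+1./2.+1.
Proof.
elim/ltn_ind: n => n IHn lt_kn odd_nk.
have [->|ne_nk] := eqVneq n k.+1; first by rewrite addSn conv_splits_jump_diag.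
have [n' def_n] : exists n', n = n'.+2 by exists n.-2; lia.
rewrite def_n !addSn (conv_splits_jumpl _ _ _ _ _ (IHn n' _ _ _)) 1?sorted_splits_eq0;
  lia.
Qed.

Theorem lemma7p11 (n m : nat) :
  2 <= m -> m <= n -> ~~ odd (n + m) ->
  ((SR n m)%:Z - (DR n m)%:Z = (uphalf m)%:Z)%R.
Proof.
case: m => // k _ lt_kn; rewrite addnS /= negbK => odd_nk.
have below := Rcard_add_diag n k.+1 (n + k).
have mid := Rcard_add_diag n k.+1 (n + k).+1.
rewrite diag_count_odd // in below.
rewrite -addnS diag_count_mid ?addnS ?negbK // conv_splits_jump // in mid.
by rewrite /SR /DR addnS /= odd_nk subn1 /=; lia.
Qed.
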